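(* Let $T>0$, $\gamma\in(0,T]$, $\mathcal{T}=[0,T]$, $\mathcal{D}$ the set of Lebesgue measurable $\delta:\mathcal{T}\to[-1,1]$ with $\int_{\mathcal{T}}|\delta(t)|\,\mathrm{d}t\le\gamma$, $\eta^+,\eta^-\in(0,1]$, and let $y(x^b,x^r,\delta,y_0,t)=y_0+\int_0^t\big(\eta^+[x^b+\delta(s)x^r]^+-\frac{1}{\eta^-}[x^b+\delta(s)x^r]^-\big)\mathrm{d}s$. Let $\bar y^+\ge 0$, $\bar y^-\ge 0$, $\bar y>0$, and $0\le y_0\le\bar y$. Then for every $x^b\in\mathbb{R}$ and $x^r\ge 0$: (i) $[x^b+\delta(t)x^r]^+\le\bar y^+$ for all $\delta\in\mathcal{D}$, $t\in\mathcal{T}$ if and only if $x^b+x^r\le\bar y^+$; (ii) $[x^b+\delta(t)x^r]^-\le\bar y^-$ for all $\delta\in\mathcal{D}$, $t\in\mathcal{T}$ if and only if $x^r-x^b\le\bar y^-$; (iii) $y(x^b,x^r,\delta,y_0,t)\le\bar y$ for all $\delta\in\mathcal{D}$, $t\in\mathcal{T}$ if and only if $y_0+\eta^+\big(\max\{\gamma x^b,Tx^b\}+\gamma x^r\big)\le\bar y$; (iv) $y(x^b,x^r,\delta,y_0,t)\ge 0$ for all $\delta\in\mathcal{D}$, $t\in\mathcal{T}$ if and only if $y_0-\frac{1}{\eta^-}\big(\gamma x^r-\min\{\gamma x^b,Tx^b\}\big)\ge 0$.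
   Context: $[a]^+=\max\{a,0\}$, $[a]^-=\max\{-a,0\}$. $x^b$ is the battery's base power, $x^r$ the reserve capacity, $[x^b+\delta(t)x^r]^\pm$ the charging/discharging power, $\bar y^\pm$ the charging/discharging power limits, $\bar y$ the storage capacity, $y_0$ the initial state-of-charge, and $y$ the state-of-charge. *)

From HB Require Import structures.
From mathcomp Require Import all_boot all_order all_algebra.
From mathcomp Require Import all_classical all_reals all_analysis.
Set Implicit Arguments. Unset Strict Implicit. Unset Printing Implicit Defensive.
Import Order.TTheory GRing.Theory Num.Theory.
Local Open Scope classical_set_scope.
Local Open Scope ring_scope.

Definition ppart {R : realType} (a : R) : R := Num.max a 0.
Definition npart {R : realType} (a : R) : R := Num.max (- a) 0.

Definition admissible {R : realType} (T gamma : R) (delta : R -> R) : Prop :=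
  [/\ measurable_fun `[0, T] delta,
      (forall t, 0 <= t <= T -> -1 <= delta t <= 1) &
      (\int[@lebesgue_measure R]_(t in `[0%R, T]) (`|delta t|)%:E <= gamma%:E)%E].

(* State of charge y(x^b, x^r, delta, y0, t), as an extended real
   (it is finite since the integrand is bounded and measurable). *)
Definition soc {R : realType} (etap etam xb xr : R) (delta : R -> R) (y0 t : R)
  : \bar R :=
  (y0%:E + \int[@lebesgue_measure R]_(s in `[0%R, t])
      (etap * ppart (xb + delta s * xr) - etam^-1 * npart (xb + delta s * xr))%:E)%E.

From mathcomp Require Import all_boot all_order all_algebra.
From mathcomp Require Import all_classical all_reals all_analysis.
From mathcomp Require Import ring lra.
Import Order.TTheory GRing.Theory Num.Theory.
Local Open Scope classical_set_scope.
Local Open Scope ring_scope.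

(* The net charging rate at reserve activation d is
   r(d) = eta+ [xb + d xr]^+ - [xb + d xr]^- / eta-.  As [.]^+ is convex and
   nondecreasing, r(d) <= eta+ ([xb]^+ + ([xb + xr]^+ - [xb]^+) |d|) on [-1, 1];
   integrating against |delta|, whose mass is at most gamma, bounds the charged
   energy y - y0 by eta+ (T [xb]^+ + gamma ([xb + xr]^+ - [xb]^+)), which equals
   eta+ [max(gamma xb, T xb) + gamma xr]^+.  The bound is attained by
   delta = gamma / T on [0, T] if xb >= 0, by delta = 1 on [0, gamma] if
   xb + xr >= 0 > xb, and at t = 0 otherwise.  Mirroring the battery,
   (xb, delta, y0, eta+, eta-) -> (-xb, -delta, -y0, 1/eta-, 1/eta+), negates
   its state of charge, which turns the lower bound (iv) into an upper bound and
   (ii) into (i); the power limits (i) are attained by a delta equal to 1 at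
   the single time 0. *)

Section Battery.
Context {R : realType}.
Implicit Types (a b c e k g T gamma etap etam xb xr t tau s d : R).
Implicit Types (delta : R -> R).
Local Notation mu := (@lebesgue_measure R).

Lemma ppart_ge0 a : 0 <= ppart a.
Proof. by rewrite le_max lexx orbT. Qed.

Lemma ppart_ge a : a <= ppart a.
Proof. by rewrite le_max lexx. Qed.

Lemma ppart_le [a b] : a <= b -> 0 <= b -> ppart a <= b.
Proof. by move=> ab b0; rewrite ge_max ab. Qed.

Lemma ger0_ppart [a] : 0 <= a -> ppart a = a.
Proof. exact: max_l. Qed.

Lemma ler0_ppart [a] : a <= 0 -> ppart a = 0.
Proof. exact: max_r. Qed.

Lemma ler_ppart [a b] : a <= b -> ppart a <= ppart b.
Proof. by move=> ab; rewrite le_max2. Qed.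

Lemma npartE a : npart a = ppart (- a).
Proof. by []. Qed.

Lemma pmul_ppart_le e a b : 0 <= e -> 0 <= b ->
  (e * ppart a <= b) = (e * a <= b).
Proof. by move=> e0 b0; rewrite /ppart maxr_pMr // mulr0 ge_max b0 andbT. Qed.

Lemma ppart_affine_le xb [xr d] : 0 <= xr -> -1 <= d <= 1 ->
  ppart (xb + d * xr) <= ppart xb + (ppart (xb + xr) - ppart xb) * `|d|.
Proof.
move=> xr0 /andP[d1 d2].
have xb_le := ppart_ge xb; have xb0 := ppart_ge0 xb.
have xbr_le := ppart_ge (xb + xr); have xbr0 := ppart_ge0 (xb + xr).
have mono : ppart xb <= ppart (xb + xr) by rewrite ler_ppart // lerDl.
(* convexity between xb and xb + xr when d >= 0, monotonicity when d < 0 *)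
apply: ppart_le; case: (lerP 0 d) => d0;
  rewrite ?(ger0_norm d0) ?(ltr0_norm d0); nra.
Qed.

Definition soc_rate etap etam xb xr d : R :=
  etap * ppart (xb + d * xr) - etam^-1 * npart (xb + d * xr).

Lemma soc_rate_le etap etam xb xr d : 0 <= etap -> 0 <= etam -> 0 <= xr ->
  -1 <= d <= 1 ->
  soc_rate etap etam xb xr d <=
    etap * ppart xb + etap * (ppart (xb + xr) - ppart xb) * `|d|.
Proof.
move=> etap0 etam0 xr0 d1; rewrite /soc_rate -mulrA -mulrDr.
have etam0' : 0 <= etam^-1 by rewrite invr_ge0.
have := ppart_affine_le xb xr0 d1; have := ppart_ge0 (- (xb + d * xr)).
rewrite npartE; nra.
Qed.

Lemma ge0_soc_rate etap etam xb xr d : 0 <= xb + d * xr ->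
  soc_rate etap etam xb xr d = etap * (xb + d * xr).
Proof.
move=> a0; rewrite /soc_rate npartE ger0_ppart // ler0_ppart ?oppr_le0 //.
by rewrite mulr0 subr0.
Qed.

Lemma soc_rateN etap etam xb xr d :
  soc_rate etap etam xb xr (- d) = - soc_rate etam^-1 etap^-1 (- xb) xr d.
Proof.
rewrite /soc_rate !npartE invrK opprB.
by congr (_ * ppart _ - _ * ppart _); rewrite mulNr opprD opprK.
Qed.

Lemma soc_rate_bound etap etam xb xr d : `|d| <= 1 ->
  `|soc_rate etap etam xb xr d| <= (`|etap| + `|etam^-1|) * (`|xb| + `|xr|).
Proof.
move=> d1; set a := xb + d * xr.
have pa : `|ppart a| <= `|a|.
  by rewrite ger0_norm ?ppart_ge0 // ppart_le ?ler_norm.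
have na : `|npart a| <= `|a|.
  by rewrite npartE ger0_norm ?ppart_ge0 // ppart_le // -normrN ler_norm.
have aB : `|a| <= `|xb| + `|xr|.
  rewrite (le_trans (ler_normD _ _)) // lerD2l normrM.
  by rewrite -[leRHS]mul1r ler_wpM2r.
rewrite /soc_rate (le_trans (ler_normB _ _)) // mulrDl !normrM.
by rewrite lerD // ler_wpM2l // (le_trans _ aB).
Qed.

Definition peak_charge T gamma xb xr : R :=
  T * ppart xb + gamma * (ppart (xb + xr) - ppart xb).

Lemma peak_chargeE T gamma xb xr : 0 <= gamma <= T -> 0 <= xr ->
  peak_charge T gamma xb xr =
    ppart (Num.max (gamma * xb) (T * xb) + gamma * xr).
Proof.
move=> /andP[g0 gT] xr0; rewrite /peak_charge.
case: (lerP 0 xb) => xb0.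
  rewrite max_r ?ler_wpM2r // !ger0_ppart ?addr_ge0 ?mulr_ge0 //.
    by ring.
  exact: le_trans gT.
rewrite (ler0_ppart (ltW xb0)) max_l ?ler_wnM2r ?(ltW xb0) //.
by rewrite mulr0 subr0 add0r -mulrDr /ppart maxr_pMr // mulr0.
Qed.

(* Stated through the measure structure, the form in which the measure appears
   in the goals produced by [integral_cst] and [integral_indic]. *)
Lemma lebesgue_measure_itv0 [t] : 0 <= t ->
  (mu : measure _ R) `[0, t]%classic = t%:E.
Proof.
move=> t0; change (mu `[0, t]%classic = t%:E).
rewrite lebesgue_measure_itv /= lte_fin.
case: ifPn => [_ | ]; first by rewrite oppr0 adde0.
by rewrite -leNgt => t_le0; rewrite (@le_anti _ _ t 0) ?t_le0.
Qed.

Lemma bounded_integrable_itv0 t (B : R) (f : R -> R) : 0 <= t ->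
  measurable_fun `[0, t] f -> (forall s, 0 <= s <= t -> `|f s| <= B) ->
  mu.-integrable `[0, t] (EFin \o f).
Proof.
move=> t0 mf fB; apply: measurable_bounded_integrable => //.
  by rewrite lebesgue_measure_itv0 // ltry.
rewrite /bounded_near; near=> M => s /=.
rewrite in_itv /= => /fB /le_trans; apply.
by near: M; apply: nbhs_pinfty_ge; exact: num_real.
Unshelve. all: by end_near.
Qed.

Lemma integral_itv0_cst t c (f : R -> R) : 0 <= t ->
  (forall s, 0 <= s <= t -> f s = c) ->
  (\int[mu]_(s in `[0%R, t]) (f s)%:E = (c * t)%:E)%E.
Proof.
move=> t0 fc; rewrite (eq_integral (cst c%:E)); last first.
  by move=> s; rewrite inE /= in_itv /= => /fc ->.
by rewrite integral_cst // lebesgue_measure_itv0 // EFinM.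
Qed.

Lemma integral_itv0_le_affine_abs c [t k g delta] [h : R -> R] :
  0 <= t -> 0 <= k -> measurable_fun `[0, t] delta ->
  (forall s, 0 <= s <= t -> `|delta s| <= 1) ->
  (\int[mu]_(s in `[0%R, t]) (`|delta s|)%:E <= g%:E)%E ->
  mu.-integrable `[0, t] (EFin \o h) ->
  (forall s, 0 <= s <= t -> h s <= c + k * `|delta s|) ->
  (\int[mu]_(s in `[0%R, t]) (h s)%:E <= (c * t + k * g)%:E)%E.
Proof.
move=> t0 k0 md d1 ig ih hle.
have icst : mu.-integrable `[0, t] (EFin \o cst c).
  by apply: (@bounded_integrable_itv0 _ `|c|) => //; exact: measurable_cst.
have iabs : mu.-integrable `[0, t] (EFin \o (fun s => `|delta s|)).
  apply: (@bounded_integrable_itv0 _ 1) => //; first exact: measurableT_comp.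
  by move=> s /d1; rewrite normr_id.
have ikabs : mu.-integrable `[0, t] (fun s => k%:E * (`|delta s|)%:E)%E.
  exact: integrableZl.
have majE : (fun s => (c + k * `|delta s|)%:E) =
    (fun s => (EFin \o cst c) s + k%:E * (`|delta s|)%:E)%E.
  by apply/funext => s /=; rewrite EFinD EFinM.
apply: (@le_trans _ _ (\int[mu]_(s in `[0%R, t]) (c + k * `|delta s|)%:E)%E).
  apply: le_integral => //; first by rewrite majE; exact: integrableD.
  by move=> s; rewrite inE /= in_itv /= lee_fin => /hle.
rewrite majE integralD // integralZl // (@integral_itv0_cst t c) // EFinD EFinM.
by rewrite leeD2l // EFinM lee_wpmul2l // lee_fin.
Qed.

Lemma admissible_restrict [T gamma delta t] : admissible T gamma delta ->
  0 <= t <= T ->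
  [/\ measurable_fun `[0, t] delta,
      (forall s, 0 <= s <= t -> -1 <= delta s <= 1) &
      (\int[mu]_(s in `[0%R, t]) (`|delta s|)%:E <= gamma%:E)%E].
Proof.
case=> md d1 ig /andP[t0 tT].
have sub : `[0, t] `<=` `[0, T].
  by move=> s /=; rewrite !in_itv /= => /andP[-> /le_trans ->].
split.
- exact: measurable_funS md.
- by move=> s /andP[s0 st]; rewrite d1 // s0 (le_trans st tT).
apply: le_trans ig; apply: ge0_subset_integral => //.
exact/measurable_realfun.measurable_EFinP/measurableT_comp.
Qed.

Lemma admissibleN [T gamma delta] : admissible T gamma delta ->
  admissible T gamma (fun s => - delta s).
Proof.
case=> md d1 ig; split.
- exact: measurable_realfun.measurable_funN.
- by move=> s /d1 /andP[? ?]; apply/andP; split; lra.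
- by under eq_integral do rewrite normrN.
Qed.

Lemma admissible_step T gamma d tau : -1 <= d <= 1 -> 0 <= tau <= T ->
  `|d| * tau <= gamma -> admissible T gamma (fun s => d * \1_`[0, tau] s).
Proof.
move=> d1 /andP[tau0 tauT] dtau; split.
- apply: measurable_realfun.measurable_funM; first exact: measurable_cst.
  by apply: measurable_realfun.measurable_indic; exact: measurable_itv.
- by move=> s _; rewrite indicE; case: (_ \in _); rewrite ?mulr1 ?mulr0 //; lra.
under eq_integral do rewrite normrM indicE normr_nat -indicE EFinM.
rewrite ge0_integralZl_EFin //; last first.
  apply/measurable_realfun.measurable_EFinP.
  by apply: measurable_realfun.measurable_indic; exact: measurable_itv.
have sub : `[0, tau] `<=` `[0, T].
  by move=> s /=; rewrite !in_itv /= => /andP[-> /le_trans ->].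
rewrite integral_indic ?setIidl //.
by rewrite (lebesgue_measure_itv0 tau0) -EFinM lee_fin.
Qed.

Lemma measurable_soc_rate etap etam xb xr (D : set R) delta : measurable D ->
  measurable_fun D delta ->
  measurable_fun D (fun s => soc_rate etap etam xb xr (delta s)).
Proof.
move=> mD md.
have ma : measurable_fun D (fun s => xb + delta s * xr).
  apply: measurable_realfun.measurable_funD => //.
  by apply: measurable_realfun.measurable_funM.
apply: measurable_realfun.measurable_funB.
  apply: measurable_realfun.measurable_funM => //.
  exact: measurable_realfun.measurable_maxr.
apply: measurable_realfun.measurable_funM => //.
apply: measurable_realfun.measurable_maxr => //.
exact: measurable_realfun.measurable_funN.
Qed.

Lemma integrable_soc_rate etap etam xb xr [T gamma delta t] :
  admissible T gamma delta -> 0 <= t <= T ->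
  mu.-integrable `[0, t]
    (EFin \o (fun s => soc_rate etap etam xb xr (delta s))).
Proof.
move=> adm tT; have [md d1 _] := admissible_restrict adm tT.
apply: (@bounded_integrable_itv0 _ ((`|etap| + `|etam^-1|) * (`|xb| + `|xr|))).
- by case/andP: tT.
- exact: measurable_soc_rate.
- by move=> s /d1; rewrite -ler_norml => /soc_rate_bound.
Qed.

Lemma soc_step etap etam xb xr y0 d tau : 0 <= tau ->
  soc etap etam xb xr (fun s => d * \1_`[0, tau] s) y0 tau =
    (y0 + soc_rate etap etam xb xr d * tau)%:E.
Proof.
move=> tau0; rewrite /soc EFinD.
rewrite (@integral_itv0_cst _ (soc_rate etap etam xb xr d)) //.
by move=> s s_in; rewrite indicE mem_set ?mulr1 //= in_itv.
Qed.

Lemma socN etap etam xb xr y0 [T gamma delta t] :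
  admissible T gamma delta -> 0 <= t <= T ->
  soc etap etam xb xr (fun s => - delta s) y0 t =
    (- soc etam^-1 etap^-1 (- xb)%R xr delta (- y0)%R t)%E.
Proof.
move=> adm tT; rewrite /soc.
have irate := integrable_soc_rate etam^-1 etap^-1 (- xb) xr adm tT.
under eq_integral => s _ do
  rewrite -[X in X%:E]/(soc_rate etap etam xb xr (- delta s)) soc_rateN
    (EFinN (soc_rate _ _ _ _ _)).
rewrite integralN; last first.
  by apply: fin_num_adde_defl; rewrite fin_numN integrable_neg_fin_num.
by rewrite [RHS]oppeD ?EFinN ?oppeK.
Qed.

Lemma soc_le_peak etap etam xb xr y0 [T gamma delta t] :
  0 <= etap -> 0 <= etam -> 0 <= xr ->
  admissible T gamma delta -> 0 <= t <= T ->
  (soc etap etam xb xr delta y0 t <=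
     (y0 + etap * peak_charge T gamma xb xr)%:E)%E.
Proof.
move=> etap0 etam0 xr0 adm tT; have [md d1 ig] := admissible_restrict adm tT.
have [t0 tT'] := andP tT.
have px_le : ppart xb <= ppart (xb + xr) by rewrite ler_ppart // lerDl.
have k0 : 0 <= etap * (ppart (xb + xr) - ppart xb).
  by rewrite mulr_ge0 ?subr_ge0.
rewrite /soc EFinD leeD2l //.
apply: le_trans (integral_itv0_le_affine_abs (etap * ppart xb) t0 k0 md _ ig
  (integrable_soc_rate etap etam xb xr adm tT) _) _.
- by move=> s /d1; rewrite ler_norml.
- by move=> s /d1; exact: soc_rate_le.
have := ler_wpM2l (mulr_ge0 etap0 (ppart_ge0 xb)) tT'.
by rewrite lee_fin /peak_charge; nra.
Qed.

Lemma soc_le_iff xb y0 b [T gamma etap etam xr] : 0 < T -> 0 <= gamma <= T ->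
  0 <= etap -> 0 <= etam -> 0 <= xr ->
  (forall delta, admissible T gamma delta -> forall t, 0 <= t <= T ->
     (soc etap etam xb xr delta y0 t <= b%:E)%E) <->
  y0 + etap * peak_charge T gamma xb xr <= b.
Proof.
move=> T0 /andP[g0 gT] etap0 etam0 xr0.
split=> [soc_le | peak_le delta adm t tT]; last first.
  apply: le_trans (soc_le_peak _ _ _ _ _ etap0 etam0 xr0 adm tT) _.
  by rewrite lee_fin.
have step d tau : -1 <= d <= 1 -> 0 <= tau <= T -> `|d| * tau <= gamma ->
    y0 + soc_rate etap etam xb xr d * tau <= b.
  move=> d1 tauT dtau; rewrite -lee_fin -soc_step; last by case/andP: tauT.
  exact/soc_le/tauT/admissible_step.
have y0_le : y0 <= b.
  have := step 0 0; rewrite !mulr0 addr0; apply; rewrite ?lexx ?(ltW T0) //.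
  lra.
rewrite /peak_charge; case: (lerP 0 xb) => xb0.
- have dT : gamma / T * T = gamma by rewrite mulfVK // gt_eqF.
  have d0 : 0 <= gamma / T by rewrite divr_ge0 // ltW.
  have d1 : gamma / T <= 1 by rewrite ler_pdivrMr // mul1r.
  have := step (gamma / T) T.
  rewrite ge0_soc_rate ?addr_ge0 ?mulr_ge0 ?invr_ge0 ?(ltW T0) //.
  have -> : etap * (xb + gamma / T * xr) * T =
      etap * (T * xb + gamma / T * T * xr) by ring.
  rewrite ger0_norm // dT !ger0_ppart ?addr_ge0 // addrAC subrr add0r.
  by apply; rewrite ?lexx ?(ltW T0) ?d1 //; lra.
rewrite (ler0_ppart (ltW xb0)) mulr0 add0r subr0.
case: (lerP 0 (xb + xr)) => xbr0; last first.
  by rewrite (ler0_ppart (ltW xbr0)) !mulr0 addr0.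
have := step 1 gamma; rewrite ge0_soc_rate ?mul1r // normr1 mul1r ger0_ppart //.
by rewrite [gamma * _]mulrC mulrA; apply; rewrite ?lexx ?g0 ?gT //; lra.
Qed.

Lemma soc_ge0_iff xb y0 [T gamma etap etam xr] : 0 < T -> 0 <= gamma <= T ->
  0 <= etap -> 0 <= etam -> 0 <= xr ->
  (forall delta, admissible T gamma delta -> forall t, 0 <= t <= T ->
     (0%:E <= soc etap etam xb xr delta y0 t)%E) <->
  0 <= y0 - etam^-1 * peak_charge T gamma (- xb) xr.
Proof.
move=> T0 gT etap0 etam0 xr0.
have etam0' : 0 <= etam^-1 by rewrite invr_ge0.
have etap0' : 0 <= etap^-1 by rewrite invr_ge0.
rewrite -oppr_le0 opprB addrC.
rewrite -(soc_le_iff (- xb) (- y0) 0 T0 gT etam0' etap0' xr0).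
split=> [soc_ge0 | socN_le] delta adm t tT.
  by rewrite -oppe_ge0 -(socN _ _ _ _ _ adm tT) (soc_ge0 _ (admissibleN adm)).
have -> : delta = (fun s => - - delta s) by apply/funext => s; rewrite opprK.
rewrite (socN _ _ _ _ _ (admissibleN adm) tT) oppe_ge0.
exact: socN_le (admissibleN adm) _ tT.
Qed.

Lemma ppart_power_le_iff xb [T gamma xr] [ybp : R] : 0 <= T -> 0 <= gamma ->
  0 <= xr -> 0 <= ybp ->
  (forall delta, admissible T gamma delta -> forall t, 0 <= t <= T ->
     ppart (xb + delta t * xr) <= ybp) <->
  xb + xr <= ybp.
Proof.
move=> T0 g0 xr0 ybp0.
split=> [power_le | xbr_le delta [_ d1 _] t /d1 /andP[? ?]]; last first.
  by apply: ppart_le => //; nra.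
have adm1 : admissible T gamma (fun s => 1 * \1_`[0, 0] s).
  by apply: admissible_step; rewrite ?lexx ?T0 ?normr1 ?mulr0 //; lra.
have := power_le _ adm1 0; rewrite indicE mem_set ?mulr1 ?mul1r /=; last first.
  by rewrite in_itv /= lexx.
by rewrite lexx T0 => /(_ isT); apply: le_trans (ppart_ge _).
Qed.

Lemma npart_power_le_iff xb [T gamma xr] [ybm : R] : 0 <= T -> 0 <= gamma ->
  0 <= xr -> 0 <= ybm ->
  (forall delta, admissible T gamma delta -> forall t, 0 <= t <= T ->
     npart (xb + delta t * xr) <= ybm) <->
  xr - xb <= ybm.
Proof.
move=> T0 g0 xr0 ybm0.
have npartN d : npart (xb + d * xr) = ppart (- xb + - d * xr).
  by rewrite npartE opprD mulNr.
rewrite addrC -(ppart_power_le_iff (- xb) T0 g0 xr0 ybm0).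
split=> power_le delta adm t tT.
  by have := power_le _ (admissibleN adm) t tT; rewrite npartN opprK.
by rewrite npartN (power_le _ (admissibleN adm)).
Qed.

End Battery.

Theorem proposition1 (R : realType) (T gamma etap etam ybp ybm yb y0 : R) :
  0 < T -> 0 < gamma -> gamma <= T ->
  0 < etap -> etap <= 1 -> 0 < etam -> etam <= 1 ->
  0 <= ybp -> 0 <= ybm -> 0 < yb -> 0 <= y0 -> y0 <= yb ->
  forall xb xr : R, 0 <= xr ->
  [/\ (forall delta, admissible T gamma delta -> forall t, 0 <= t <= T ->
          ppart (xb + delta t * xr) <= ybp) <-> xb + xr <= ybp,
      (forall delta, admissible T gamma delta -> forall t, 0 <= t <= T ->
          npart (xb + delta t * xr) <= ybm) <-> xr - xb <= ybm,
      (forall delta, admissible T gamma delta -> forall t, 0 <= t <= T ->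
          (soc etap etam xb xr delta y0 t <= yb%:E)%E) <->
        y0 + etap * (Num.max (gamma * xb) (T * xb) + gamma * xr) <= yb &
      (forall delta, admissible T gamma delta -> forall t, 0 <= t <= T ->
          (0%:E <= soc etap etam xb xr delta y0 t)%E) <->
        0 <= y0 - etam^-1 * (gamma * xr - Num.min (gamma * xb) (T * xb))].
Proof.
move=> T0 g0 gT etap0 _ etam0 _ ybp0 ybm0 _ y00 y0_le xb xr xr0.
have gT' : 0 <= gamma <= T by rewrite ltW.
split.
- exact: ppart_power_le_iff (ltW T0) (ltW g0) xr0 ybp0.
- exact: npart_power_le_iff (ltW T0) (ltW g0) xr0 ybm0.
- rewrite (soc_le_iff _ _ _ T0 gT' (ltW etap0) (ltW etam0) xr0).
  by rewrite peak_chargeE // -!lerBrDl pmul_ppart_le ?subr_ge0 // ltW.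
- rewrite (soc_ge0_iff _ _ T0 gT' (ltW etap0) (ltW etam0) xr0).
  rewrite peak_chargeE // !mulrN -oppr_min [- _ + _]addrC !subr_ge0.
  by rewrite pmul_ppart_le // invr_ge0 ltW.
Qed.
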